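(* Assume $1<\gamma<2$ and $\alpha,\beta\ge0$ with $\beta+\alpha\gamma>2$. Fix $(t_0,x_0)$ with $t_0\ge 0$ and $|x_0|\ge t_0+2$, and write $r_0=|x_0|$. For $0\le\tilde r\le t_0$ and $\tilde\omega\in\mathbb{S}^2$ put $x=x_0+\tilde r\tilde\omega$, $r=|x|$, $\omega=x/r$, $\tau=\omega\cdot\tilde\omega$. Then \[ \int_{\mathbb{S}^2}\big((1+\tau)r^{\gamma}+(r_0-t_0)^{\gamma}\big)^{-\alpha}r^{-\beta}\,d\tilde\omega\le C(r_0-\tilde r)^{2-\beta-\gamma+\epsilon}r_0^{-2}\Big((r_0-\tilde r)^{(1-\alpha)\gamma}+(r_0-t_0)^{(1-\alpha)\gamma}\Big) \] where $\epsilon=0$ if $\alpha\ne1$, while if $\alpha=1$ the estimate holds for any $\epsilon>0$; the constant $C$ depends only on $\epsilon,\gamma,\alpha,\beta$. *)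

From Stdlib Require Import Reals Lra.
From Coquelicot Require Import Coquelicot.
Open Scope R_scope.

Definition vec3 : Type := (R * R * R)%type.
Definition dot3 (u v : vec3) : R :=
  let '(u1, u2, u3) := u in let '(v1, v2, v3) := v in u1*v1 + u2*v2 + u3*v3.
Definition norm3 (u : vec3) : R := sqrt (dot3 u u).
Definition add3 (u v : vec3) : vec3 :=
  let '(u1, u2, u3) := u in let '(v1, v2, v3) := v in (u1+v1, u2+v2, u3+v3).
Definition scal3 (a : R) (u : vec3) : vec3 :=
  let '(u1, u2, u3) := u in (a*u1, a*u2, a*u3).

Definition sph (th ph : R) : vec3 := (sin th * cos ph, sin th * sin ph, cos th).

(* Integral over S^2 with respect to the standard surface measure,
   written in spherical coordinates: the surface element is sin(th) dth dph. *)
Definition sphere_integral (f : vec3 -> R) : R :=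
  RInt (fun ph => RInt (fun th => f (sph th ph) * sin th) 0 PI) 0 (2 * PI).

Definition integrand (alpha beta gamma t0 rt : R) (x0 : vec3) (wt : vec3) : R :=
  let x := add3 x0 (scal3 rt wt) in
  let r := norm3 x in
  let w := scal3 (/ r) x in
  let tau := dot3 w wt in
  let r0 := norm3 x0 in
  Rpower ((1 + tau) * Rpower r gamma + Rpower (r0 - t0) gamma) (- alpha)
  * Rpower r (- beta).

(* Both [r] and [tau] depend on [w~] only through [s], the cosine of the angle
   between [x0] and [w~]: [r^2 = r0^2 + rt^2 + 2 r0 rt s] and [tau = (r0 s + rt) / r].  The
   Funk-Hecke formula [int_{S^2} g (u . w) dw = 2 pi int_{-1}^{1} g] therefore reduces the
   integral to one over [s].  We prove that formula in spherical coordinates: tilting the pole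
   by an angle [a] changes the integral at a rate which is the integral of a divergence, hence
   zero, first for C^1 functions [g] and then for continuous ones by uniform approximation.
   Then split [[-1, 1]] at [1 + s = (r0 - rt)^2 / (2 r0^2)].  Below this point [r] is
   comparable to [r0 - rt] and [1 + tau >= r0^2 (1 + s) / (2 r^2)], so the integrand is at most
   [(A (1 + s) + (r0 - t0)^gamma)^(-alpha) (r0 - rt)^(-beta)], whose integral is explicit: it
   gives the first term of the bound if [alpha < 1], the second if [alpha > 1], and a logarithm,
   absorbed by [(r0 - rt)^eps], if [alpha = 1].  Above it [r^2] is comparable to
   [r0^2 (1 + s)], and [int (1 + s)^(-(alpha gamma + beta) / 2)] is dominated by its value at
   the splitting point because [alpha gamma + beta > 2]. *)

From Stdlib Require Import Reals Lra.
From Coquelicot Require Import Coquelicot.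
Open Scope R_scope.

(** * Calculus on [R] *)

Lemma Rabs_sin_sub_le x y : Rabs (sin x - sin y) <= Rabs (x - y).
Proof.
  destruct (MVT_gen sin y x cos) as [c [_ ->]].
  - intros z _. auto_derive; auto. ring.
  - intros z _. apply continuity_sin.
  - rewrite Rabs_mult. pose proof (Rabs_pos (x - y)).
    assert (Rabs (cos c) <= 1) by (apply Rabs_le, COS_bound). nra.
Qed.

Lemma Rabs_cos_sub_le x y : Rabs (cos x - cos y) <= Rabs (x - y).
Proof.
  destruct (MVT_gen cos y x (fun z => - sin z)) as [c [_ ->]].
  - intros z _. auto_derive; auto. ring.
  - intros z _. apply continuity_cos.
  - rewrite Rabs_mult, Rabs_Ropp. pose proof (Rabs_pos (x - y)).
    assert (Rabs (sin c) <= 1) by (apply Rabs_le, SIN_bound). nra.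
Qed.

Lemma Rabs_sin_le_1 x : Rabs (sin x) <= 1.
Proof. apply Rabs_le, SIN_bound. Qed.

Lemma Rabs_cos_le_1 x : Rabs (cos x) <= 1.
Proof. apply Rabs_le, COS_bound. Qed.

Lemma Rabs_Rmult_sub_le x y x0 y0 :
  Rabs (x * y - x0 * y0) <= Rabs (x - x0) * Rabs y + Rabs x0 * Rabs (y - y0).
Proof.
  replace (x * y - x0 * y0) with ((x - x0) * y + x0 * (y - y0)) by ring.
  rewrite <- !Rabs_mult. apply Rabs_triang.
Qed.

(* Coquelicot's generic lemmas with the structures on [R] fixed, so that [apply] unifies. *)
Lemma continuous_Rplus (f g : R -> R) x :
  continuous f x -> continuous g x -> continuous (fun y => f y + g y) x.
Proof. intros; apply (continuous_plus (V:=R_NormedModule)); auto. Qed.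

Lemma continuous_Rminus (f g : R -> R) x :
  continuous f x -> continuous g x -> continuous (fun y => f y - g y) x.
Proof. intros; apply (continuous_minus (V:=R_NormedModule)); auto. Qed.

Lemma continuous_Rmult (f g : R -> R) x :
  continuous f x -> continuous g x -> continuous (fun y => f y * g y) x.
Proof. intros; apply (continuous_mult (K:=R_AbsRing)); auto. Qed.

Lemma continuous_Ropp (f : R -> R) x : continuous f x -> continuous (fun y => - f y) x.
Proof. intros; apply (continuous_opp (V:=R_NormedModule)); auto. Qed.

Lemma continuous_Rcomp (f g : R -> R) x :
  continuous f x -> continuous g (f x) -> continuous (fun y => g (f y)) x.
Proof. intros; apply (continuous_comp f g); auto. Qed.

Lemma ex_derive_continuous_R (f : R -> R) x : ex_derive f x -> continuous f x.
Proof. apply (ex_derive_continuous (K:=R_AbsRing) (V:=R_NormedModule)). Qed.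

Lemma continuous_Rinv (f : R -> R) x :
  continuous f x -> f x <> 0 -> continuous (fun y => / f y) x.
Proof.
  intros Hf Hn. apply (continuous_Rcomp f (fun z => / z)); auto.
  apply ex_derive_continuous_R. auto_derive. auto.
Qed.

Lemma ex_RInt_continuous_R (f : R -> R) a b :
  (forall z, Rmin a b <= z <= Rmax a b -> continuous f z) -> ex_RInt f a b.
Proof. apply (ex_RInt_continuous (V:=R_CompleteNormedModule)). Qed.

Ltac continuity_R := repeat match goal with
  | |- continuous (fun _ => _) _ => apply continuous_const
  | |- continuous sin _ => apply continuous_sin
  | |- continuous cos _ => apply continuous_cos
  | |- continuous (fun y => y) _ => apply continuous_id
  | |- continuous (fun y => sin _) _ => apply continuous_sin_comp
  | |- continuous (fun y => cos _) _ => apply continuous_cos_comp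
  | |- continuous (fun y => _ + _) _ => apply continuous_Rplus
  | |- continuous (fun y => _ - _) _ => apply continuous_Rminus
  | |- continuous (fun y => _ * _) _ => apply continuous_Rmult
  | |- continuous (fun y => - _) _ => apply continuous_Ropp
  | |- continuous (fun y => _ / _) _ => unfold Rdiv
  | |- continuous (Rmult ?c) _ => apply (continuous_Rmult (fun _ => c) (fun y => y))
  | |- continuous (Rplus ?c) _ => apply (continuous_Rplus (fun _ => c) (fun y => y))
  | H : forall z, continuous ?h z |- continuous ?h _ => apply H
  | H : forall z, continuous ?h z |- continuous (fun y => ?h _) _ =>
      apply (continuous_Rcomp _ h); [|apply H]
  end.

Lemma RInt_Rmult_r (f : R -> R) c a b : ex_RInt f a b ->
  RInt (fun s => f s * c) a b = RInt f a b * c.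
Proof.
  intros H. rewrite (RInt_ext (V:=R_CompleteNormedModule) _ (fun s => scal c (f s))).
  - rewrite (RInt_scal (V:=R_CompleteNormedModule)) by auto. apply Rmult_comm.
  - intros; apply Rmult_comm.
Qed.

Lemma RInt_Rmult_l (f : R -> R) c a b : ex_RInt f a b ->
  RInt (fun s => c * f s) a b = c * RInt f a b.
Proof. intros H. apply (RInt_scal (V:=R_CompleteNormedModule)); auto. Qed.

Lemma RInt_Rminus (f g : R -> R) a b : ex_RInt f a b -> ex_RInt g a b ->
  RInt (fun t => f t - g t) a b = RInt f a b - RInt g a b.
Proof. apply (RInt_minus (V:=R_CompleteNormedModule)). Qed.

Lemma RInt_is_derive_R (f df : R -> R) a b :
  (forall x, Rmin a b <= x <= Rmax a b -> is_derive f x (df x)) ->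
  (forall x, Rmin a b <= x <= Rmax a b -> continuous df x) ->
  RInt df a b = f b - f a.
Proof.
  intros Hd Hc. apply (is_RInt_unique (V:=R_CompleteNormedModule)).
  apply (is_RInt_derive f df); auto.
Qed.

Lemma Rabs_RInt_minus_le (f g : R -> R) a b e :
  a <= b -> ex_RInt f a b -> ex_RInt g a b ->
  (forall t, a <= t <= b -> Rabs (f t - g t) <= e) ->
  Rabs (RInt f a b - RInt g a b) <= (b - a) * e.
Proof.
  intros Hab Hf Hg H.
  rewrite <- RInt_Rminus by auto.
  apply abs_RInt_le_const; auto. apply (ex_RInt_minus f g a b Hf Hg).
Qed.

Lemma Rabs_RInt_minus_lt (f g : R -> R) a b (eps : posreal) :
  a <= b -> ex_RInt f a b -> ex_RInt g a b ->
  (forall t, a <= t <= b -> Rabs (f t - g t) <= eps / (2 * (b - a + 1))) ->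
  Rabs (RInt f a b - RInt g a b) < eps.
Proof.
  intros Hab Hf Hg H. destruct eps as [e He]; simpl in *.
  eapply Rle_lt_trans; [apply (Rabs_RInt_minus_le f g a b _ Hab Hf Hg H)|].
  apply Rle_lt_trans with ((b - a + 1) * (e / (2 * (b - a + 1)))).
  - apply Rmult_le_compat_r; [left; apply Rdiv_lt_0_compat|]; lra.
  - field_simplify; lra.
Qed.

Lemma continuous_RInt_param (K : R -> R -> R) a b y0 :
  a <= b -> (forall y, ex_RInt (K y) a b) ->
  (forall e, 0 < e -> exists d, 0 < d /\ forall y t, Rabs (y - y0) < d ->
     a <= t <= b -> Rabs (K y t - K y0 t) <= e) ->
  continuous (fun y => RInt (K y) a b) y0.
Proof.
  intros Hab Hex HU. apply filterlim_locally. intros eps.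
  destruct (HU (eps / (2 * (b - a + 1)))) as [d [Hd H]].
  { apply Rdiv_lt_0_compat; [apply cond_pos | lra]. }
  exists (mkposreal d Hd). intros v Hv.
  apply (Rabs_RInt_minus_lt _ _ a b eps); auto.
Qed.

Lemma continuity_2d_pt_RInt_param (K : R -> R -> R -> R) a b x0 y0 :
  a <= b -> (forall x y, ex_RInt (K x y) a b) ->
  (forall e, 0 < e -> exists d, 0 < d /\ forall x y t, Rabs (x - x0) < d ->
     Rabs (y - y0) < d -> a <= t <= b -> Rabs (K x y t - K x0 y0 t) <= e) ->
  continuity_2d_pt (fun x y => RInt (K x y) a b) x0 y0.
Proof.
  intros Hab Hex HU eps.
  destruct (HU (eps / (2 * (b - a + 1)))) as [d [Hd H]].
  { apply Rdiv_lt_0_compat; [apply cond_pos | lra]. }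
  exists (mkposreal d Hd). intros u v Hu Hv.
  apply (Rabs_RInt_minus_lt _ _ a b eps); auto.
Qed.

Lemma unif_continuous_segment (h : R -> R) a b :
  (forall x, a <= x <= b -> continuous h x) ->
  forall e, 0 < e -> exists d, 0 < d /\ forall x y, a <= x <= b -> a <= y <= b ->
    Rabs (x - y) < d -> Rabs (h x - h y) < e.
Proof.
  intros Hc e He.
  destruct (unifcont_normed_1d h a b Hc (mkposreal e He)) as [d Hd].
  exists d. split; [apply cond_pos|]. intros x y Hx Hy Hxy.
  rewrite Rabs_minus_sym. apply (Hd x y Hx Hy).
  change (Rabs (y - x) < d). rewrite Rabs_minus_sym. exact Hxy.
Qed.

Lemma bounded_segment (h : R -> R) a b : a <= b ->
  (forall x, a <= x <= b -> continuous h x) ->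
  exists M, forall x, a <= x <= b -> Rabs (h x) <= M.
Proof.
  intros Hab Hc.
  destruct (continuity_ab_maj (fun x => Rabs (h x)) a b Hab) as [m [Hm _]].
  - intros c Hc'. apply continuity_pt_filterlim.
    apply (continuous_Rcomp h Rabs); [apply Hc; auto|].
    apply continuity_pt_filterlim, Rcontinuity_abs.
  - exists (Rabs (h m)). auto.
Qed.

Lemma is_derive_Rmult (f h : R -> R) x df dh : is_derive f x df -> is_derive h x dh ->
  is_derive (fun y => f y * h y) x (df * h x + f x * dh).
Proof. intros H1 H2. apply (is_derive_mult f h x df dh H1 H2). intros; apply Rmult_comm. Qed.

Lemma is_derive_Rcomp (f h : R -> R) x df dh : is_derive f x df -> is_derive h (f x) dh ->
  is_derive (fun y => h (f y)) x (dh * df).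
Proof. intros H1 H2. rewrite Rmult_comm. exact (is_derive_comp h f x dh df H2 H1). Qed.

Lemma is_derive_RInt_param_R (f df : R -> R -> R) a b x :
  (forall u t, is_derive (fun u => f u t) u (df u t)) ->
  (forall t, continuity_2d_pt df x t) -> (forall u, ex_RInt (f u) a b) ->
  is_derive (fun u => RInt (f u) a b) x (RInt (df x) a b).
Proof.
  intros Hd Hc He.
  rewrite (RInt_ext (df x) (fun t => Derive (fun u => f u t) x))
    by (intros; symmetry; apply is_derive_unique, Hd).
  apply is_derive_RInt_param.
  - exists (mkposreal 1 Rlt_0_1). intros y _ t _. eexists. apply Hd.
  - intros t _. eapply continuity_2d_pt_ext; [|apply Hc].
    intros u v. symmetry. apply is_derive_unique, Hd.
  - exists (mkposreal 1 Rlt_0_1). intros y _. apply He.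
Qed.

(* Values of [RInt] and [is_derive] are typed in Coquelicot's structures; [ring] and [field]
   need the equation stated in [R]. *)
Ltac eq_R := lazymatch goal with |- ?x = ?y => change (@eq R x y) end.

Ltac ring_R := cbv beta; eq_R;
  repeat match goal with
  | |- context [@minus ?G ?x ?y] => change (@minus G x y) with (x - y)
  | |- context [@plus ?G ?x ?y] => change (@plus G x y) with (x + y)
  | |- context [@opp ?G ?x] => change (@opp G x) with (- x)
  | |- context [@scal ?K ?V ?x ?y] => change (@scal K V x y) with (x * y)
  | |- context [@zero ?G] => change (@zero G) with 0
  end; ring.

Lemma is_derive_eq (f : R -> R) (x d1 d2 : R) : is_derive f x d1 -> d1 = d2 -> is_derive f x d2.
Proof. intros H ->; exact H. Qed.

Lemma continuity_2d_pt_Rcomp (h : R -> R) (f : R -> R -> R) x y :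
  (forall z, continuous h z) -> continuity_2d_pt f x y ->
  continuity_2d_pt (fun u v => h (f u v)) x y.
Proof.
  intros Hh Hf. apply continuity_1d_2d_pt_comp; auto. apply continuity_pt_filterlim, Hh.
Qed.

Lemma continuity_2d_pt_continuous_2 (f : R -> R -> R) x y :
  continuity_2d_pt f x y -> continuous (f x) y.
Proof.
  intros H. apply filterlim_locally. intros eps.
  destruct (H eps) as [d Hd]. exists d. intros v Hv.
  apply Hd; [rewrite Rminus_eq_0, Rabs_R0; apply cond_pos | exact Hv].
Qed.

Ltac continuity_2d := repeat match goal with
  | |- continuity_2d_pt (fun _ _ => _) _ _ => apply continuity_2d_pt_const
  | |- continuity_2d_pt (fun u v => u) _ _ => apply continuity_2d_pt_id1
  | |- continuity_2d_pt (fun u v => v) _ _ => apply continuity_2d_pt_id2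
  | |- continuity_2d_pt (fun u v => _ + _) _ _ => apply continuity_2d_pt_plus
  | |- continuity_2d_pt (fun u v => _ - _) _ _ => apply continuity_2d_pt_minus
  | |- continuity_2d_pt (fun u v => _ * _) _ _ => apply continuity_2d_pt_mult
  | |- continuity_2d_pt (fun u v => - _) _ _ => apply continuity_2d_pt_opp
  | |- continuity_2d_pt (fun u v => sin _) _ _ =>
      apply (continuity_2d_pt_Rcomp sin); [apply continuous_sin|]
  | |- continuity_2d_pt (fun u v => cos _) _ _ =>
      apply (continuity_2d_pt_Rcomp cos); [apply continuous_cos|]
  | H : forall z, continuous ?h z |- continuity_2d_pt (fun u v => ?h _) _ _ =>
      apply (continuity_2d_pt_Rcomp h); [exact H|]
  end.

(** * The Funk-Hecke formula on S^2 *)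

Lemma dot3_unit_bound (u w : vec3) : dot3 u u = 1 -> dot3 w w = 1 -> -1 <= dot3 u w <= 1.
Proof.
  destruct u as [[u1 u2] u3]; destruct w as [[w1 w2] w3]; simpl. intros Hu Hw.
  (* Lagrange's identity *)
  assert (L : (u1 * w1 + u2 * w2 + u3 * w3) ^ 2 + ((u1 * w2 - u2 * w1) ^ 2 +
      (u1 * w3 - u3 * w1) ^ 2 + (u2 * w3 - u3 * w2) ^ 2)
      = (u1 * u1 + u2 * u2 + u3 * u3) * (w1 * w1 + w2 * w2 + w3 * w3)) by ring.
  rewrite Hu, Hw in L.
  assert (Hsq : (u1 * w1 + u2 * w2 + u3 * w3) ^ 2 <= 1).
  { pose proof (pow2_ge_0 (u1 * w2 - u2 * w1)). pose proof (pow2_ge_0 (u1 * w3 - u3 * w1)).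
    pose proof (pow2_ge_0 (u2 * w3 - u3 * w2)). lra. }
  nra.
Qed.

Lemma dot3_sph_sph th ph : dot3 (sph th ph) (sph th ph) = 1.
Proof.
  unfold sph, dot3. pose proof (sin2_cos2 th). pose proof (sin2_cos2 ph). unfold Rsqr in *.
  transitivity (sin th * sin th * (sin ph * sin ph + cos ph * cos ph) + cos th * cos th); [ring|].
  rewrite H0. lra.
Qed.

(* The cosine of the angle between [sph t p] and the pole tilted by the angle [a]. *)
Definition zonal_cos (a t p : R) := sin a * sin t * cos p + cos a * cos t.
Definition zonal_cos_da (a t p : R) := cos a * sin t * cos p - sin a * cos t.

Lemma zonal_cos_da_shift a t p : zonal_cos_da a t p = zonal_cos (a + PI / 2) t p.
Proof. unfold zonal_cos, zonal_cos_da. rewrite sin_plus, cos_plus, sin_PI2, cos_PI2. ring. Qed.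

Lemma zonal_cos_bound a t p : -1 <= zonal_cos a t p <= 1.
Proof.
  replace (zonal_cos a t p) with (dot3 (sph a 0) (sph t p)).
  - apply dot3_unit_bound; apply dot3_sph_sph.
  - unfold zonal_cos, dot3, sph. rewrite sin_0, cos_0. ring.
Qed.

Lemma Rabs_zonal_cos_sub_le a t p a0 p0 :
  Rabs (zonal_cos a t p - zonal_cos a0 t p0) <= 2 * Rabs (a - a0) + Rabs (p - p0).
Proof.
  unfold zonal_cos.
  replace (sin a * sin t * cos p + cos a * cos t - (sin a0 * sin t * cos p0 + cos a0 * cos t))
    with (sin t * (sin a * cos p - sin a0 * cos p0) + cos t * (cos a - cos a0)) by ring.
  eapply Rle_trans; [apply Rabs_triang|]. rewrite !Rabs_mult.
  assert (Hprod : Rabs (sin a * cos p - sin a0 * cos p0) <= Rabs (a - a0) + Rabs (p - p0)).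
  { eapply Rle_trans; [apply Rabs_Rmult_sub_le|].
    pose proof (Rabs_sin_sub_le a a0). pose proof (Rabs_cos_sub_le p p0).
    pose proof (Rabs_cos_le_1 p). pose proof (Rabs_sin_le_1 a0).
    pose proof (Rabs_pos (sin a - sin a0)). pose proof (Rabs_pos (cos p - cos p0)).
    pose proof (Rabs_pos (cos p)). pose proof (Rabs_pos (sin a0)). nra. }
  pose proof (Rabs_cos_sub_le a a0).
  pose proof (Rabs_sin_le_1 t). pose proof (Rabs_cos_le_1 t).
  pose proof (Rabs_pos (sin a * cos p - sin a0 * cos p0)). pose proof (Rabs_pos (cos a - cos a0)).
  pose proof (Rabs_pos (sin t)). pose proof (Rabs_pos (cos t)).
  assert (Rabs (sin t) * Rabs (sin a * cos p - sin a0 * cos p0)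
          <= Rabs (sin a * cos p - sin a0 * cos p0)) by nra.
  assert (Rabs (cos t) * Rabs (cos a - cos a0) <= Rabs (cos a - cos a0)) by nra.
  lra.
Qed.

Lemma unif_continuous_zonal (h : R -> R) : (forall x, continuous h x) ->
  forall e, 0 < e -> exists d, 0 < d /\ forall a t p a0 p0,
    Rabs (a - a0) < d -> Rabs (p - p0) < d ->
    Rabs (h (zonal_cos a t p) - h (zonal_cos a0 t p0)) < e.
Proof.
  intros Hc e He.
  destruct (unif_continuous_segment h (-1) 1 (fun x _ => Hc x) e He) as [d [Hd H]].
  exists (d / 3). split; [lra|]. intros a t p a0 p0 Ha Hp.
  apply H; try apply zonal_cos_bound.
  pose proof (Rabs_zonal_cos_sub_le a t p a0 p0). lra.
Qed.

Section Meridian.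
Variable g : R -> R.
Hypothesis g_cont : forall x, continuous g x.

Definition meridian a p t := g (zonal_cos a t p) * sin t.
Definition meridian_int a p := RInt (meridian a p) 0 PI.
Definition tilted_int a := RInt (meridian_int a) 0 (2 * PI).

Lemma ex_RInt_meridian a p b c : ex_RInt (meridian a p) b c.
Proof.
  apply ex_RInt_continuous_R. intros t _. unfold meridian, zonal_cos. continuity_R.
Qed.

Lemma continuous_meridian_int a p : continuous (meridian_int a) p.
Proof.
  apply (continuous_RInt_param (fun y t => meridian a y t)); [pose proof PI_RGT_0; lra| |].
  { intros; apply ex_RInt_meridian. }
  intros e He. destruct (unif_continuous_zonal g g_cont e He) as [d [Hd H]].
  exists d. split; auto. intros y t Hy Ht. unfold meridian.
  rewrite <- Rmult_minus_distr_r, Rabs_mult.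
  specialize (H a t y a p). rewrite Rminus_eq_0, Rabs_R0 in H.
  pose proof (H Hd Hy). pose proof (Rabs_sin_le_1 t). pose proof (Rabs_pos (sin t)).
  pose proof (Rabs_pos (g (zonal_cos a t y) - g (zonal_cos a t p))). nra.
Qed.

Lemma ex_RInt_meridian_int a b c : ex_RInt (meridian_int a) b c.
Proof. apply ex_RInt_continuous_R. intros; apply continuous_meridian_int. Qed.

Lemma meridian_int_periodic a p : meridian_int a (p + 2 * PI) = meridian_int a p.
Proof.
  apply RInt_ext. intros x _. unfold meridian, zonal_cos.
  rewrite cos_plus, cos_2PI, sin_2PI. f_equal. f_equal. ring.
Qed.

End Meridian.

Section Rotation.
Variables g g' : R -> R.
Hypothesis g_deriv : forall x, is_derive g x (g' x).
Hypothesis g'_cont : forall x, continuous g' x.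

Let g_cont x : continuous g x.
Proof. apply ex_derive_continuous_R. eexists. apply g_deriv. Qed.

Definition meridian_da a p t := g' (zonal_cos a t p) * zonal_cos_da a t p * sin t.
Definition meridian_int_da a p := RInt (meridian_da a p) 0 PI.

Lemma ex_RInt_meridian_da a p b c : ex_RInt (meridian_da a p) b c.
Proof.
  apply ex_RInt_continuous_R. intros t _. unfold meridian_da, zonal_cos_da.
  unfold zonal_cos; continuity_R.
Qed.

Lemma meridian_is_derive a p t : is_derive (fun u => meridian g u p t) a (meridian_da a p t).
Proof.
  unfold meridian, meridian_da.
  assert (HS : is_derive (fun u => zonal_cos u t p) a (zonal_cos_da a t p)).
  { unfold zonal_cos, zonal_cos_da. auto_derive; auto. ring. }
  eapply is_derive_eq.
  - apply is_derive_Rmult; [|apply is_derive_const].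
    exact (is_derive_Rcomp _ g a _ _ HS (g_deriv _)).
  - ring_R.
Qed.

Lemma continuity_2d_pt_meridian_da p a0 t0 :
  continuity_2d_pt (fun u v => meridian_da u p v) a0 t0.
Proof. unfold meridian_da, zonal_cos, zonal_cos_da. continuity_2d. Qed.

Lemma meridian_int_is_derive a p :
  is_derive (fun u => meridian_int g u p) a (meridian_int_da a p).
Proof.
  apply (is_derive_RInt_param_R (fun u t => meridian g u p t) (fun u t => meridian_da u p t)).
  - intros; apply meridian_is_derive.
  - intros; apply continuity_2d_pt_meridian_da.
  - intros; apply ex_RInt_meridian, g_cont.
Qed.

Lemma meridian_da_unif_close a p e : 0 < e -> exists d, 0 < d /\ forall x y t,
  Rabs (x - a) < d -> Rabs (y - p) < d -> Rabs (meridian_da x y t - meridian_da a p t) <= e.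
Proof.
  intros He.
  destruct (bounded_segment g' (-1) 1) as [M HM]; [lra | intros; auto|].
  assert (HM0 : 0 <= M) by (eapply Rle_trans; [apply Rabs_pos | apply (HM 0); lra]).
  destruct (unif_continuous_zonal g' g'_cont (e / 2)) as [d1 [Hd1 H1]]; [lra|].
  set (d2 := e / (6 * (M + 1))).
  assert (Hd2 : 0 < d2) by (apply Rdiv_lt_0_compat; lra).
  assert (HMd2 : M * (3 * d2) <= e / 2).
  { apply Rle_trans with ((M + 1) * (3 * d2)); [nra|]. right. unfold d2. field. lra. }
  exists (Rmin d1 d2). split; [apply Rmin_pos; auto|].
  intros x y t Hx Hy. pose proof (Rmin_l d1 d2). pose proof (Rmin_r d1 d2).
  specialize (H1 x t y a p ltac:(lra) ltac:(lra)).
  pose proof (Rabs_zonal_cos_sub_le (x + PI / 2) t y (a + PI / 2) p) as HL.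
  replace (x + PI / 2 - (a + PI / 2)) with (x - a) in HL by ring.
  rewrite <- !zonal_cos_da_shift in HL.
  assert (HB : Rabs (zonal_cos_da x t y) <= 1)
    by (rewrite zonal_cos_da_shift; apply Rabs_le, zonal_cos_bound).
  pose proof (HM _ (zonal_cos_bound a t p)) as HMS.
  assert (Hprod : Rabs (g' (zonal_cos x t y) * zonal_cos_da x t y
                        - g' (zonal_cos a t p) * zonal_cos_da a t p) <= e).
  { eapply Rle_trans; [apply Rabs_Rmult_sub_le|].
    pose proof (Rabs_pos (g' (zonal_cos x t y) - g' (zonal_cos a t p))).
    pose proof (Rabs_pos (zonal_cos_da x t y - zonal_cos_da a t p)).
    assert (Rabs (g' (zonal_cos x t y) - g' (zonal_cos a t p)) * Rabs (zonal_cos_da x t y)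
            <= e / 2) by (apply Rle_trans with (e / 2 * 1);
                         [apply Rmult_le_compat; try apply Rabs_pos; lra | lra]).
    assert (Rabs (g' (zonal_cos a t p)) * Rabs (zonal_cos_da x t y - zonal_cos_da a t p)
            <= M * (3 * d2)) by (apply Rmult_le_compat; try apply Rabs_pos; lra).
    lra. }
  unfold meridian_da. rewrite <- Rmult_minus_distr_r, Rabs_mult.
  apply Rle_trans with (e * 1); [|lra].
  apply Rmult_le_compat; auto using Rabs_pos, Rabs_sin_le_1.
Qed.

Lemma continuity_2d_pt_meridian_int_da a p : continuity_2d_pt meridian_int_da a p.
Proof.
  apply (continuity_2d_pt_RInt_param meridian_da); [pose proof PI_RGT_0; lra | |].
  - intros; apply ex_RInt_meridian_da.
  - intros e He. destruct (meridian_da_unif_close a p e He) as [d [Hd H]].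
    exists d. split; auto.
Qed.

Lemma tilted_int_is_derive a :
  is_derive (tilted_int g) a (RInt (meridian_int_da a) 0 (2 * PI)).
Proof.
  apply (is_derive_RInt_param_R (fun u p => meridian_int g u p) meridian_int_da).
  - intros; apply meridian_int_is_derive.
  - intros; apply continuity_2d_pt_meridian_int_da.
  - intros; apply ex_RInt_meridian_int, g_cont.
Qed.

Definition polar_flux a p t := sin t * cos p * g (zonal_cos a t p).
Definition polar_flux_dt a p t := cos t * cos p * g (zonal_cos a t p)
  + sin t * cos p * (g' (zonal_cos a t p) * (sin a * cos t * cos p - cos a * sin t)).
Definition azimuthal_flux a p t := cos t * sin p * g (zonal_cos a t p).
Definition azimuthal_flux_dp a p t := cos t * cos p * g (zonal_cos a t p)
  + cos t * sin p * (g' (zonal_cos a t p) * - (sin a * sin t * sin p)).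

(* The [a]-derivative of the integrand is a divergence in the coordinates [(t, p)]:
   tilting the pole is an infinitesimal rotation, a divergence-free vector field on the sphere. *)
Lemma meridian_da_divergence a p t :
  meridian_da a p t = azimuthal_flux_dp a p t - polar_flux_dt a p t.
Proof.
  unfold meridian_da, azimuthal_flux_dp, polar_flux_dt, zonal_cos_da.
  apply Rminus_diag_uniq.
  transitivity (g' (zonal_cos a t p) * sin a * sin t * cos t
                * (sin p * sin p + cos p * cos p - 1)); [ring|].
  pose proof (sin2_cos2 p) as Hp. unfold Rsqr in Hp. rewrite Hp. ring.
Qed.

Lemma polar_flux_is_derive a p t :
  is_derive (fun t => polar_flux a p t) t (polar_flux_dt a p t).
Proof.
  unfold polar_flux, polar_flux_dt.
  assert (HS : is_derive (fun t => zonal_cos a t p) t (sin a * cos t * cos p - cos a * sin t)).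
  { unfold zonal_cos. auto_derive; auto. ring. }
  eapply is_derive_eq.
  - apply is_derive_Rmult; [|exact (is_derive_Rcomp _ g t _ _ HS (g_deriv _))].
    auto_derive; auto.
  - ring_R.
Qed.

Lemma azimuthal_flux_is_derive a p t :
  is_derive (fun p => azimuthal_flux a p t) p (azimuthal_flux_dp a p t).
Proof.
  unfold azimuthal_flux, azimuthal_flux_dp.
  assert (HS : is_derive (fun p => zonal_cos a t p) p (- (sin a * sin t * sin p))).
  { unfold zonal_cos. auto_derive; auto. ring. }
  eapply is_derive_eq.
  - apply is_derive_Rmult; [|exact (is_derive_Rcomp _ g p _ _ HS (g_deriv _))].
    auto_derive; auto.
  - ring_R.
Qed.

Lemma meridian_int_da_azimuthal a p :
  meridian_int_da a p = RInt (azimuthal_flux_dp a p) 0 PI.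
Proof.
  assert (ExB : ex_RInt (azimuthal_flux_dp a p) 0 PI).
  { apply ex_RInt_continuous_R. intros z _. unfold azimuthal_flux_dp.
    unfold zonal_cos; continuity_R. }
  assert (ExA : ex_RInt (polar_flux_dt a p) 0 PI).
  { apply ex_RInt_continuous_R. intros z _. unfold polar_flux_dt.
    unfold zonal_cos; continuity_R. }
  assert (HA : RInt (polar_flux_dt a p) 0 PI = 0).
  { rewrite (RInt_is_derive_R (polar_flux a p)).
    - unfold polar_flux. rewrite sin_PI, sin_0. ring_R.
    - intros; apply polar_flux_is_derive.
    - intros; unfold polar_flux_dt.
      unfold zonal_cos; continuity_R. }
  unfold meridian_int_da. rewrite (RInt_ext _ _ _ _ (fun t _ => meridian_da_divergence a p t)).
  rewrite (RInt_Rminus _ _ _ _ ExB ExA), HA. ring_R.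
Qed.

Lemma azimuthal_flux_int_is_derive a p :
  is_derive (fun p => RInt (azimuthal_flux a p) 0 PI) p (meridian_int_da a p).
Proof.
  rewrite meridian_int_da_azimuthal.
  apply (is_derive_RInt_param_R (fun u t => azimuthal_flux a u t)
                                (fun u t => azimuthal_flux_dp a u t)).
  - intros; apply azimuthal_flux_is_derive.
  - intros; unfold azimuthal_flux_dp, zonal_cos. continuity_2d.
  - intros; apply ex_RInt_continuous_R. intros; unfold azimuthal_flux, zonal_cos. continuity_R.
Qed.

Lemma RInt_meridian_int_da a : RInt (meridian_int_da a) 0 (2 * PI) = 0.
Proof.
  rewrite (RInt_is_derive_R (fun p => RInt (azimuthal_flux a p) 0 PI)).
  - assert (Z : forall q, sin q = 0 -> RInt (azimuthal_flux a q) 0 PI = 0).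
    { intros q Hq. rewrite (RInt_ext _ (fun _ => 0)), RInt_const; [apply Rmult_0_r|].
      intros x _. unfold azimuthal_flux. rewrite Hq. ring_R. }
    rewrite !Z; [ring_R | apply sin_0 | apply sin_2PI].
  - intros; apply azimuthal_flux_int_is_derive.
  - intros p _. apply continuity_2d_pt_continuous_2, continuity_2d_pt_meridian_int_da.
Qed.

Lemma tilted_int_invariant a : tilted_int g a = tilted_int g 0.
Proof.
  destruct (MVT_gen (tilted_int g) 0 a (fun _ => 0)) as [c [_ Hc]]; [| |lra].
  - intros x _. eapply is_derive_eq; [apply tilted_int_is_derive | apply RInt_meridian_int_da].
  - intros x _. apply continuity_pt_filterlim, ex_derive_continuous_R.
    eexists. apply tilted_int_is_derive.
Qed.

End Rotation.

Lemma tilted_int_0 (g : R -> R) : (forall x, continuous g x) ->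
  tilted_int g 0 = 2 * PI * RInt g (-1) 1.
Proof.
  intros Hg.
  set (c := RInt (fun t => g (cos t) * sin t) 0 PI).
  unfold tilted_int. rewrite (RInt_ext _ (fun _ => c)).
  2: { intros x _. apply RInt_ext. intros t _. unfold meridian, zonal_cos.
       rewrite sin_0, cos_0. do 2 f_equal. ring. }
  rewrite RInt_const. change (scal (2 * PI - 0) c) with ((2 * PI - 0) * c).
  assert (Hc : c = RInt g (-1) 1).
  { assert (H : RInt (fun y => scal (- sin y) (g (cos y))) 0 PI = RInt g (cos 0) (cos PI)).
    { apply (RInt_comp (V:=R_CompleteNormedModule)); intros; [apply Hg|].
      split; [auto_derive; auto; ring | continuity_R]. }
    rewrite cos_0, cos_PI in H.
    rewrite <- (opp_RInt_swap (V:=R_CompleteNormedModule) g (-1) 1) in H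
      by (apply ex_RInt_continuous_R; intros; apply Hg).
    rewrite (RInt_ext _ (fun y => opp (g (cos y) * sin y))) in H.
    2: { intros; change (- sin x * g (cos x) = - (g (cos x) * sin x)). ring. }
    rewrite (RInt_opp (V:=R_CompleteNormedModule)) in H.
    - change (- c = - RInt g (-1) 1) in H. lra.
    - apply ex_RInt_continuous_R. intros.
      apply continuous_Rmult; [apply continuous_Rcomp; [apply continuous_cos | apply Hg]
                              | apply continuous_sin]. }
  rewrite Hc. ring_R.
Qed.

Lemma tilted_int_C1 (g g' : R -> R) a :
  (forall x, is_derive g x (g' x)) -> (forall x, continuous g' x) ->
  tilted_int g a = 2 * PI * RInt g (-1) 1.
Proof.
  intros Hg Hg'. rewrite (tilted_int_invariant g g'); auto. apply tilted_int_0.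
  intros x. apply ex_derive_continuous_R. eexists. apply Hg.
Qed.

Lemma eq_0_of_Rabs_le_eps (L K : R) : 0 < K -> (forall e, 0 < e -> Rabs L <= K * e) -> L = 0.
Proof.
  intros HK H. destruct (Req_dec L 0) as [|Hn]; auto.
  pose proof (Rabs_pos_lt L Hn).
  specialize (H (Rabs L / (2 * K)) ltac:(apply Rdiv_lt_0_compat; lra)).
  replace (K * (Rabs L / (2 * K))) with (Rabs L / 2) in H by (field; lra). lra.
Qed.

Lemma is_derive_RInt_upper (g : R -> R) s : (forall x, continuous g x) ->
  is_derive (fun s => RInt g 0 s) s (g s).
Proof.
  intros Hg. apply (is_derive_RInt g (fun s => RInt g 0 s) 0 s); [|apply Hg].
  exists (mkposreal 1 Rlt_0_1). intros b _. apply (RInt_correct (V:=R_CompleteNormedModule)).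
  apply ex_RInt_continuous_R. intros; apply Hg.
Qed.

(* The mean of [g] over [[s, s + h]]: a C^1 function converging uniformly to [g] as [h -> 0]. *)
Definition fwd_mean (g : R -> R) h s := (RInt g 0 (s + h) - RInt g 0 s) / h.
Definition fwd_mean_d (g : R -> R) h s := (g (s + h) - g s) / h.

Section Mollify.
Variable g : R -> R.
Hypothesis g_cont : forall x, continuous g x.

Lemma fwd_mean_is_derive h s : is_derive (fwd_mean g h) s (fwd_mean_d g h s).
Proof.
  unfold fwd_mean, fwd_mean_d.
  assert (H1 : is_derive (fun s => RInt g 0 (s + h)) s (g (s + h) * 1)).
  { apply (is_derive_Rcomp (fun s => s + h) (fun s => RInt g 0 s));
      [auto_derive; auto | apply is_derive_RInt_upper, g_cont]. }
  pose proof (is_derive_RInt_upper g s g_cont) as H2.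
  pose proof (is_derive_scal _ s (/ h) _ (is_derive_minus _ _ s _ _ H1 H2)) as H.
  eapply is_derive_ext; [|eapply is_derive_eq; [exact H|]]; intros; unfold Rdiv; ring_R.
Qed.

Lemma continuous_fwd_mean_d h s : continuous (fwd_mean_d g h) s.
Proof. unfold fwd_mean_d. continuity_R. Qed.

Lemma fwd_mean_approx e : 0 < e ->
  exists h, 0 < h /\ forall s, -1 <= s <= 1 -> Rabs (fwd_mean g h s - g s) <= e.
Proof.
  intros He.
  destruct (unif_continuous_segment g (-1) 2 (fun x _ => g_cont x) e He) as [d [Hd H]].
  set (h := Rmin (d / 2) 1).
  assert (Hh : 0 < h) by (apply Rmin_pos; lra).
  assert (h <= 1) by apply Rmin_r. assert (h <= d / 2) by apply Rmin_l.
  exists h. split; auto. intros s Hs.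
  assert (Ex : forall u v, ex_RInt g u v)
    by (intros; apply ex_RInt_continuous_R; intros; apply g_cont).
  assert (E : RInt g 0 (s + h) - RInt g 0 s = RInt g s (s + h)).
  { rewrite <- (RInt_Chasles (V:=R_CompleteNormedModule) g 0 s (s + h)); auto. ring_R. }
  assert (B : Rabs (RInt g s (s + h) - RInt (fun _ => g s) s (s + h)) <= (s + h - s) * e).
  { apply Rabs_RInt_minus_le; auto; [lra | apply ex_RInt_const |].
    intros t Ht. left. apply H; try lra. rewrite Rabs_right; lra. }
  rewrite RInt_const in B. change (scal (s + h - s) (g s)) with ((s + h - s) * g s) in B.
  replace (s + h - s) with h in B by ring.
  unfold fwd_mean. rewrite E.
  replace (RInt g s (s + h) / h - g s) with ((RInt g s (s + h) - h * g s) / h) by (field; lra).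
  unfold Rdiv. rewrite Rabs_mult, Rabs_inv, (Rabs_right h) by lra.
  apply Rmult_le_reg_r with h; auto. rewrite Rmult_assoc, Rinv_l by lra. lra.
Qed.

End Mollify.

Lemma tilted_int_eq (g : R -> R) a : (forall x, continuous g x) ->
  tilted_int g a = 2 * PI * RInt g (-1) 1.
Proof.
  intros Hg. pose proof PI_RGT_0.
  apply Rminus_diag_uniq, (eq_0_of_Rabs_le_eps _ (2 * PI * PI + 4 * PI)); [nra|].
  intros e He. destruct (fwd_mean_approx g Hg e He) as [h [Hh Hap]].
  assert (Hc : forall x, continuous (fwd_mean g h) x)
    by (intros; apply ex_derive_continuous_R; eexists; apply fwd_mean_is_derive, Hg).
  pose proof (tilted_int_C1 (fwd_mean g h) (fwd_mean_d g h) a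
    (fwd_mean_is_derive g Hg h) (continuous_fwd_mean_d g Hg h)) as E.
  assert (B1 : Rabs (tilted_int g a - tilted_int (fwd_mean g h) a)
               <= (2 * PI - 0) * ((PI - 0) * e)).
  { apply Rabs_RInt_minus_le; [lra | apply ex_RInt_meridian_int; auto ..|].
    intros p Hp. apply Rabs_RInt_minus_le; [lra | apply ex_RInt_meridian; auto ..|].
    intros t Ht. unfold meridian. rewrite <- Rmult_minus_distr_r, Rabs_mult.
    pose proof (Rabs_sin_le_1 t). pose proof (Rabs_pos (sin t)).
    assert (Rabs (g (zonal_cos a t p) - fwd_mean g h (zonal_cos a t p)) <= e).
    { rewrite Rabs_minus_sym. apply Hap, zonal_cos_bound. }
    pose proof (Rabs_pos (g (zonal_cos a t p) - fwd_mean g h (zonal_cos a t p))). nra. }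
  assert (B2 : Rabs (RInt (fwd_mean g h) (-1) 1 - RInt g (-1) 1) <= (1 - -1) * e).
  { apply Rabs_RInt_minus_le; [lra | apply ex_RInt_continuous_R; auto ..|]. auto. }
  replace (tilted_int g a - 2 * PI * RInt g (-1) 1) with
    ((tilted_int g a - tilted_int (fwd_mean g h) a)
     + 2 * PI * (RInt (fwd_mean g h) (-1) 1 - RInt g (-1) 1)) by (rewrite E; ring).
  eapply Rle_trans; [apply Rabs_triang|]. rewrite Rabs_mult, (Rabs_right (2 * PI)) by lra.
  nra.
Qed.

Lemma RInt_periodic_shift (H : R -> R) psi :
  (forall x, continuous H x) -> (forall x, H (x + 2 * PI) = H x) ->
  RInt (fun p => H (p - psi)) 0 (2 * PI) = RInt H 0 (2 * PI).
Proof.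
  intros Hc Hp.
  assert (Ex : forall u v, ex_RInt H u v)
    by (intros; apply ex_RInt_continuous_R; intros; apply Hc).
  assert (E1 : RInt (fun p => H (p - psi)) 0 (2 * PI) = RInt H (- psi) (2 * PI - psi)).
  { pose proof (RInt_comp_lin (V:=R_CompleteNormedModule) H 1 (- psi) 0 (2 * PI)) as E.
    replace (1 * 0 + - psi) with (- psi) in E by ring.
    replace (1 * (2 * PI) + - psi) with (2 * PI - psi) in E by ring.
    rewrite <- E by apply Ex. apply RInt_ext. intros x _.
    change (H (x - psi) = 1 * H (1 * x + - psi)). rewrite !Rmult_1_l. reflexivity. }
  assert (E2 : RInt H (2 * PI) (2 * PI - psi) = RInt H 0 (- psi)).
  { pose proof (RInt_comp_lin (V:=R_CompleteNormedModule) H 1 (2 * PI) 0 (- psi)) as E.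
    replace (1 * 0 + 2 * PI) with (2 * PI) in E by ring.
    replace (1 * - psi + 2 * PI) with (2 * PI - psi) in E by ring.
    rewrite <- E by apply Ex. apply RInt_ext. intros x _.
    change (1 * H (1 * x + 2 * PI) = H x). rewrite !Rmult_1_l, Hp. reflexivity. }
  rewrite E1.
  rewrite <- (RInt_Chasles (V:=R_CompleteNormedModule) H (- psi) (2 * PI) (2 * PI - psi)),
          <- (RInt_Chasles (V:=R_CompleteNormedModule) H (- psi) 0 (2 * PI)), E2,
          <- (opp_RInt_swap (V:=R_CompleteNormedModule) H 0 (- psi)) by apply Ex.
  ring_R.
Qed.

Lemma unit_circle_angle (c d : R) : c * c + d * d = 1 -> exists psi, c = cos psi /\ d = sin psi.
Proof.
  intros H.
  assert (Hc : -1 <= c <= 1) by nra.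
  assert (Hs : sin (acos c) = Rabs d).
  { rewrite sin_acos by auto. replace (1 - c²) with (Rsqr d) by (unfold Rsqr; lra).
    apply sqrt_Rsqr_abs. }
  destruct (Rle_dec 0 d) as [Hd | Hd].
  - exists (acos c). rewrite cos_acos, Hs, Rabs_right by lra. auto.
  - exists (- acos c). rewrite cos_neg, sin_neg, cos_acos, Hs, Rabs_left by lra.
    split; auto; ring.
Qed.

(* A unit vector [u] has spherical coordinates [(al, psi)]; the substitution [ph -> ph - psi]
   turns the integral into [tilted_int g al]. *)
Lemma sphere_integral_zonal (g : R -> R) (u : vec3) :
  (forall x, continuous g x) -> dot3 u u = 1 ->
  sphere_integral (fun w => g (dot3 u w)) = 2 * PI * RInt g (-1) 1.
Proof.
  intros Hg Hu. destruct u as [[u1 u2] u3]. simpl in Hu.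
  assert (H3 : -1 <= u3 <= 1) by nra.
  set (al := acos u3).
  assert (Hca : cos al = u3) by (apply cos_acos; auto).
  assert (Hsa : sin al * sin al = u1 * u1 + u2 * u2).
  { unfold al. rewrite sin_acos, sqrt_sqrt by (unfold Rsqr; nra). unfold Rsqr; lra. }
  assert (Hpsi : exists psi, u1 = sin al * cos psi /\ u2 = sin al * sin psi).
  { destruct (Req_dec (sin al) 0) as [Z | NZ].
    - exists 0. rewrite Z in *. split; nra.
    - destruct (unit_circle_angle (u1 / sin al) (u2 / sin al)) as [psi [E1 E2]].
      { replace (u1 / sin al * (u1 / sin al) + u2 / sin al * (u2 / sin al))
          with ((u1 * u1 + u2 * u2) / (sin al * sin al)) by (field; auto).
        rewrite <- Hsa. field. auto. }
      exists psi. rewrite <- E1, <- E2. split; field; auto. }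
  destruct Hpsi as [psi [E1 E2]].
  transitivity (RInt (fun ph => meridian_int g al (ph - psi)) 0 (2 * PI)).
  { apply RInt_ext. intros x _. apply RInt_ext. intros t _.
    unfold meridian, zonal_cos, sph, dot3.
    rewrite cos_minus, Hca, E1, E2. f_equal. f_equal. ring. }
  rewrite RInt_periodic_shift.
  - apply tilted_int_eq, Hg.
  - intros; apply continuous_meridian_int, Hg.
  - intros; apply meridian_int_periodic.
Qed.

Definition clamp s := Rmax (-1) (Rmin 1 s).

Lemma clamp_bound x : -1 <= clamp x <= 1.
Proof. unfold clamp, Rmax, Rmin. repeat destruct Rle_dec; lra. Qed.

Lemma clamp_id x : -1 <= x <= 1 -> clamp x = x.
Proof. intros. unfold clamp, Rmax, Rmin. repeat destruct Rle_dec; lra. Qed.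

Lemma continuous_clamp x : continuous clamp x.
Proof.
  apply filterlim_locally. intros eps. exists eps. intros y Hy.
  change (Rabs (clamp y - clamp x) < eps). change (Rabs (y - x) < eps) in Hy.
  unfold clamp, Rmax, Rmin in *.
  repeat destruct Rle_dec; unfold Rabs in *; repeat destruct Rcase_abs; lra.
Qed.

Lemma sphere_integral_ext_unit (f1 f2 : vec3 -> R) :
  (forall w, dot3 w w = 1 -> f1 w = f2 w) -> sphere_integral f1 = sphere_integral f2.
Proof.
  intros H. apply RInt_ext. intros ph _. apply RInt_ext. intros th _.
  rewrite H; [reflexivity | apply dot3_sph_sph].
Qed.

Theorem funk_hecke (g : R -> R) (u : vec3) :
  (forall x, -1 <= x <= 1 -> continuous g x) -> dot3 u u = 1 ->
  sphere_integral (fun w => g (dot3 u w)) = 2 * PI * RInt g (-1) 1.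
Proof.
  intros Hg Hu.
  rewrite (sphere_integral_ext_unit _ (fun w => g (clamp (dot3 u w)))).
  2: { intros w Hw. rewrite clamp_id; [reflexivity | apply dot3_unit_bound; auto]. }
  rewrite (sphere_integral_zonal (fun s => g (clamp s))); auto.
  - f_equal. apply RInt_ext. intros x Hx. rewrite Rmin_left, Rmax_right in Hx by lra.
    rewrite clamp_id; [reflexivity | lra].
  - intros x. apply continuous_Rcomp; [apply continuous_clamp | apply Hg, clamp_bound].
Qed.

Lemma exp_le_compat x y : x <= y -> exp x <= exp y.
Proof. intros [H|H]; [left; apply exp_increasing; auto | subst; lra]. Qed.

Lemma Rpower_pos x e : 0 < Rpower x e.
Proof. apply exp_pos. Qed.

Lemma Rle_Rpower_l_neg x y e : 0 < x -> x <= y -> e <= 0 -> Rpower y e <= Rpower x e.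
Proof.
  intros Hx Hxy He. unfold Rpower. apply exp_le_compat.
  pose proof (ln_le x y Hx Hxy). nra.
Qed.

Lemma Rpower_sqrt_l x e : 0 < x -> Rpower (sqrt x) e = Rpower x (e / 2).
Proof. intros Hx. rewrite <- Rpower_sqrt, Rpower_mult by auto. f_equal. field. Qed.

Lemma Rpower_split_sqr x e : 0 < x -> Rpower x e = x * x * Rpower x (e - 2).
Proof.
  intros Hx. replace e with (INR 2 + (e - 2)) at 1 by (simpl; ring).
  rewrite Rpower_plus, Rpower_pow by auto. simpl. ring.
Qed.

Lemma Rpower_m1 x : 0 < x -> Rpower x (-1) = / x.
Proof. intros. replace (-1) with (- (1)) by ring. rewrite Rpower_Ropp, Rpower_1; auto. Qed.

Lemma Rpower_ge_self t q : 0 < t -> t <= 1 -> q <= 1 -> t <= Rpower t q.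
Proof.
  intros H1 H2 H3. rewrite <- (Rpower_1 t) at 1 by auto. unfold Rpower. apply exp_le_compat.
  assert (ln t <= 0) by (rewrite <- ln_1; apply ln_le; lra). nra.
Qed.

Lemma Rpower_plus_le x y q : 0 < x -> 0 < y -> 0 <= q <= 1 ->
  Rpower (x + y) q <= Rpower x q + Rpower y q.
Proof.
  intros Hx Hy Hq.
  set (t := x / (x + y)).
  assert (Ht : 0 < t < 1).
  { unfold t. split; [apply Rdiv_lt_0_compat; lra|].
    apply Rmult_lt_reg_r with (x + y); [lra|]. field_simplify; lra. }
  assert (F1 : Rpower x q = Rpower (x + y) q * Rpower t q).
  { rewrite Rpower_mult_distr by lra. f_equal. unfold t. field. lra. }
  assert (F2 : Rpower y q = Rpower (x + y) q * Rpower (1 - t) q).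
  { rewrite Rpower_mult_distr by lra. f_equal. unfold t. field. lra. }
  rewrite F1, F2.
  pose proof (Rpower_ge_self t q ltac:(lra) ltac:(lra) ltac:(lra)).
  pose proof (Rpower_ge_self (1 - t) q ltac:(lra) ltac:(lra) ltac:(lra)).
  pose proof (Rpower_pos (x + y) q). nra.
Qed.

Lemma ln_le_Rpower_div y eta : 0 < y -> 0 < eta -> ln y <= Rpower y eta / eta.
Proof.
  intros Hy He. pose proof (exp_ineq1_le (eta * ln y)).
  apply Rmult_le_reg_l with eta; auto. unfold Rpower. field_simplify; lra.
Qed.

Ltac Rpower_pos := first [ assumption | apply exp_pos | apply Rpower_pos
  | apply Rmult_lt_0_compat; Rpower_pos | apply Rinv_0_lt_compat; Rpower_pos
  | apply Rplus_lt_0_compat; Rpower_pos | lra ].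

Ltac ln_expand := repeat match goal with
  | |- context [ln (?x * ?y)] => rewrite (ln_mult x y) by Rpower_pos
  | |- context [ln (/ ?x)] => rewrite (ln_Rinv x) by Rpower_pos
  | |- context [ln (exp ?x)] => rewrite (ln_exp x)
  end.

Ltac Rpower_eq := unfold Rpower, Rdiv; ln_expand; rewrite <- ?exp_plus; f_equal; field.

Lemma is_derive_Rpower x e : 0 < x -> is_derive (fun y => Rpower y e) x (e * Rpower x (e - 1)).
Proof. intros H. apply is_derive_Reals, derivable_pt_lim_power, H. Qed.

Lemma continuous_Rpower (f : R -> R) x e :
  continuous f x -> 0 < f x -> continuous (fun y => Rpower (f y) e) x.
Proof.
  intros Hf Hp. apply (continuous_Rcomp f (fun z => Rpower z e)); auto.
  apply ex_derive_continuous_R. eexists. apply is_derive_Rpower, Hp.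
Qed.

(** * Reduction to an integral over [[-1, 1]] *)

(* With [r0 = |x0|] and [s] the cosine of the angle between [x0] and [w~],
   [radius r0 rt s] is [r = |x0 + rt w~|] and [(r0 s + rt) / r] is [tau]. *)
Definition radius2 r0 rt s := r0 * r0 + rt * rt + 2 * r0 * rt * s.
Definition radius r0 rt s := sqrt (radius2 r0 rt s).
Definition radial (al be ga t0 rt r0 s : R) :=
  Rpower ((1 + (r0 * s + rt) / radius r0 rt s) * Rpower (radius r0 rt s) ga
          + Rpower (r0 - t0) ga) (- al)
  * Rpower (radius r0 rt s) (- be).

Section Radius.
Variables r0 rt s : R.
Hypothesis rt_ge0 : 0 <= rt.
Hypothesis rt_lt : rt < r0.
Hypothesis s_ge : -1 <= s.

Lemma radius2_eq : radius2 r0 rt s = (r0 - rt) * (r0 - rt) + 2 * r0 * rt * (1 + s).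
Proof. unfold radius2. ring. Qed.

Lemma radius_sqr : radius r0 rt s * radius r0 rt s = radius2 r0 rt s.
Proof. apply sqrt_sqrt. rewrite radius2_eq. assert (0 <= r0 * rt) by nra. nra. Qed.

Lemma radius_ge : r0 - rt <= radius r0 rt s.
Proof.
  unfold radius. rewrite <- (sqrt_square (r0 - rt)) by lra.
  apply sqrt_le_1_alt. rewrite radius2_eq. assert (0 <= r0 * rt) by nra. nra.
Qed.

Lemma radius_pos : 0 < radius r0 rt s.
Proof. pose proof radius_ge. lra. Qed.

Hypothesis s_le : s <= 1.

(* [1 + tau = (r - (r0 - rt) + r0 (1 + s)) / r] and [r^2 - (r0 - rt)^2 = 2 r0 rt (1 + s)]. *)
Lemma one_plus_tau_ge :
  r0 * r0 * (1 + s) / (2 * (radius r0 rt s * radius r0 rt s))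
  <= 1 + (r0 * s + rt) / radius r0 rt s.
Proof.
  pose proof radius_ge as HRa. pose proof radius_sqr as HRR. rewrite radius2_eq in HRR.
  set (a := r0 - rt) in *. set (R := radius r0 rt s) in *. set (p := 1 + s).
  assert (Hrr : 0 <= r0 * rt) by nra.
  assert (Ha : 0 < a) by (unfold a; lra).
  replace (1 + (r0 * s + rt) / R) with ((R - a + r0 * p) / R) by (unfold p, a; field; lra).
  apply Rmult_le_reg_r with (2 * (R * R)); [nra|].
  replace (r0 * r0 * p / (2 * (R * R)) * (2 * (R * R))) with (r0 * r0 * p) by (field; nra).
  replace ((R - a + r0 * p) / R * (2 * (R * R))) with (2 * R * (R - a + r0 * p)) by (field; nra).
  apply Rmult_le_reg_r with (R + a); [lra|].
  replace (2 * R * (R - a + r0 * p) * (R + a))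
    with (2 * R * ((R * R - a * a) + r0 * p * (R + a))) by ring.
  rewrite HRR. unfold p.
  assert (0 <= 4 * R * rt + (2 * R - r0) * (R + a)) by (unfold a in *; nra).
  assert (0 <= r0 * (1 + s)) by nra.
  nra.
Qed.

Lemma radial_base_ge ga E :
  r0 * r0 * (1 + s) / 2 * Rpower (radius r0 rt s) (ga - 2) + E
  <= (1 + (r0 * s + rt) / radius r0 rt s) * Rpower (radius r0 rt s) ga + E.
Proof.
  apply Rplus_le_compat_r.
  pose proof radius_pos as HR. pose proof one_plus_tau_ge as K.
  rewrite (Rpower_split_sqr (radius r0 rt s) ga HR).
  pose proof (Rpower_pos (radius r0 rt s) (ga - 2)) as HP.
  set (R := radius r0 rt s) in *. set (P := Rpower R (ga - 2)) in *.
  replace ((1 + (r0 * s + rt) / R) * (R * R * P)) with (((1 + (r0 * s + rt) / R) * (R * R)) * P)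
    by ring.
  apply Rmult_le_compat_r; [lra|].
  apply Rmult_le_reg_r with (/ (R * R)); [apply Rinv_0_lt_compat; nra|].
  replace ((1 + (r0 * s + rt) / R) * (R * R) * / (R * R)) with (1 + (r0 * s + rt) / R)
    by (field; lra).
  replace (r0 * r0 * (1 + s) / 2 * / (R * R)) with (r0 * r0 * (1 + s) / (2 * (R * R)))
    by (field; lra).
  exact K.
Qed.

Lemma radial_base_pos ga E : 0 < E ->
  0 < (1 + (r0 * s + rt) / radius r0 rt s) * Rpower (radius r0 rt s) ga + E.
Proof.
  intros HE. eapply Rlt_le_trans; [|apply radial_base_ge].
  assert (0 <= r0 * r0 * (1 + s) / 2 * Rpower (radius r0 rt s) (ga - 2)).
  { pose proof (Rpower_pos (radius r0 rt s) (ga - 2)).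
    assert (0 <= r0 * r0 * (1 + s)) by (apply Rmult_le_pos; nra).
    unfold Rdiv. apply Rmult_le_pos; [apply Rmult_le_pos|]; lra. }
  lra.
Qed.

End Radius.

Lemma continuous_radial al be ga t0 rt r0 s : 0 <= rt <= t0 -> t0 + 2 <= r0 -> -1 <= s <= 1 ->
  continuous (radial al be ga t0 rt r0) s.
Proof.
  intros Hrt Hr0 Hs.
  assert (HR : 0 < radius r0 rt s) by (apply radius_pos; lra).
  assert (HRc : continuous (radius r0 rt) s).
  { pose proof (radius_sqr r0 rt s ltac:(lra) ltac:(lra) ltac:(lra)).
    apply ex_derive_continuous_R. unfold radius, radius2 in *. auto_derive. nra. }
  unfold radial. apply continuous_Rmult; apply continuous_Rpower; auto.
  - continuity_R.
    + apply continuous_Rinv; [exact HRc | lra].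
    + apply continuous_Rpower; auto.
  - apply radial_base_pos; try lra. apply Rpower_pos.
Qed.

Lemma ex_RInt_radial al be ga t0 rt r0 u v : 0 <= rt <= t0 -> t0 + 2 <= r0 ->
  -1 <= u <= 1 -> -1 <= v <= 1 -> ex_RInt (radial al be ga t0 rt r0) u v.
Proof.
  intros Hrt Hr0 Hu Hv. apply ex_RInt_continuous_R. intros z Hz. apply continuous_radial; try lra.
  split; [apply Rle_trans with (Rmin u v); [apply Rmin_glb; lra | apply Hz]|].
  apply Rle_trans with (Rmax u v); [apply Hz | apply Rmax_lub; lra].
Qed.

Lemma dot3_self_norm3 (x : vec3) : dot3 x x = norm3 x * norm3 x.
Proof.
  unfold norm3. rewrite sqrt_sqrt; [reflexivity|].
  destruct x as [[a b] c]; simpl. nra.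
Qed.

Lemma dot3_unit_normalize (x : vec3) : 0 < norm3 x ->
  dot3 (scal3 (/ norm3 x) x) (scal3 (/ norm3 x) x) = 1.
Proof.
  intros Hr. pose proof (dot3_self_norm3 x) as Hx.
  destruct x as [[a b] c]. simpl in *.
  transitivity ((a * a + b * b + c * c) / (norm3 (a, b, c) * norm3 (a, b, c))); [field; lra|].
  rewrite Hx. field. lra.
Qed.

Lemma integrand_radial al be ga t0 rt (x0 w : vec3) :
  0 <= rt < norm3 x0 -> dot3 w w = 1 ->
  integrand al be ga t0 rt x0 w
  = radial al be ga t0 rt (norm3 x0) (dot3 (scal3 (/ norm3 x0) x0) w).
Proof.
  intros Hrt Hw. pose proof (dot3_self_norm3 x0) as Hr0.
  set (r0 := norm3 x0) in *. set (s := dot3 (scal3 (/ r0) x0) w).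
  assert (Hs : dot3 x0 w = r0 * s).
  { unfold s. destruct x0 as [[a b] c]; destruct w as [[d e] f]; simpl. field. lra. }
  assert (HN : norm3 (add3 x0 (scal3 rt w)) = radius r0 rt s).
  { unfold norm3, radius, radius2. f_equal.
    destruct x0 as [[a b] c]; destruct w as [[d e] f]; simpl in *.
    transitivity ((a * a + b * b + c * c) + 2 * rt * (a * d + b * e + c * f)
                  + rt * rt * (d * d + e * e + f * f)); [ring|].
    rewrite Hr0, Hs, Hw. ring. }
  assert (HT : dot3 (scal3 (/ radius r0 rt s) (add3 x0 (scal3 rt w))) w
               = (r0 * s + rt) / radius r0 rt s).
  { destruct x0 as [[a b] c]; destruct w as [[d e] f]; simpl in *. unfold Rdiv.
    transitivity ((a * d + b * e + c * f + rt * (d * d + e * e + f * f)) * / radius r0 rt s);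
      [ring|].
    rewrite Hw, Hs. ring. }
  unfold integrand. fold r0. rewrite HN, HT. reflexivity.
Qed.

Lemma sphere_integral_radial al be ga t0 rt (x0 : vec3) :
  0 <= rt <= t0 -> t0 + 2 <= norm3 x0 ->
  sphere_integral (integrand al be ga t0 rt x0)
  = 2 * PI * RInt (radial al be ga t0 rt (norm3 x0)) (-1) 1.
Proof.
  intros Hrt Hr0.
  set (u := scal3 (/ norm3 x0) x0).
  assert (Hu : dot3 u u = 1) by (apply dot3_unit_normalize; lra).
  rewrite (sphere_integral_ext_unit _ (fun w => radial al be ga t0 rt (norm3 x0) (dot3 u w))).
  - apply funk_hecke; auto. intros; apply continuous_radial; lra.
  - intros w Hw. apply integrand_radial; auto; lra.
Qed.

(** * Estimates *)

Definition near_slope ga r0 a := r0 * r0 * Rpower (2 * a) (ga - 2) / 2.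
Definition split_point r0 a := a * a / (2 * (r0 * r0)).

Section Split.
Variables ga r0 a : R.
Hypothesis a_pos : 0 < a.
Hypothesis a_le : a <= r0.

Lemma split_point_bounds : 0 < split_point r0 a <= 1 / 2.
Proof.
  unfold split_point. split; [apply Rdiv_lt_0_compat; nra|].
  apply Rmult_le_reg_r with (2 * (r0 * r0)); [nra|]. field_simplify; nra.
Qed.

Lemma near_slope_pos : 0 < near_slope ga r0 a.
Proof.
  unfold near_slope. pose proof (Rpower_pos (2 * a) (ga - 2)).
  apply Rdiv_lt_0_compat; [apply Rmult_lt_0_compat|]; nra.
Qed.

Lemma near_slope_split : near_slope ga r0 a * split_point r0 a = Rpower 2 (ga - 4) * Rpower a ga.
Proof.
  unfold near_slope, split_point.
  apply ln_inv; [unfold Rdiv; Rpower_pos | Rpower_pos|]. unfold Rpower, Rdiv. ln_expand. field.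
Qed.

Lemma near_slope_inv_Rpower be :
  Rpower (near_slope ga r0 a) (-1) * Rpower a (- be)
  = Rpower 2 (3 - ga) * (Rpower r0 (-2) * Rpower a (2 - ga - be)).
Proof. unfold near_slope. Rpower_eq. Qed.

End Split.

Section Pointwise.
Variables al be ga t0 rt r0 : R.
Hypothesis ga_bounds : 1 < ga < 2.
Hypothesis al_ge0 : 0 <= al.
Hypothesis be_ge0 : 0 <= be.
Hypothesis rt_bounds : 0 <= rt <= t0.
Hypothesis r0_ge : t0 + 2 <= r0.

(* Near the antipode of [x0] ([1 + s] small) the radius stays in [[r0 - rt, 2 (r0 - rt)]]. *)
Lemma radial_le_near s : -1 <= s -> 1 + s <= split_point r0 (r0 - rt) ->
  radial al be ga t0 rt r0 s
  <= Rpower (near_slope ga r0 (r0 - rt) * (1 + s) + Rpower (r0 - t0) ga) (- al)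
     * Rpower (r0 - rt) (- be).
Proof.
  intros Hs Hp.
  pose proof (split_point_bounds r0 (r0 - rt) ltac:(lra) ltac:(lra)).
  pose proof (near_slope_pos ga r0 (r0 - rt) ltac:(lra) ltac:(lra)).
  assert (0 <= near_slope ga r0 (r0 - rt) * (1 + s)) by (apply Rmult_le_pos; lra).
  unfold split_point in *.
  assert (Hs1 : -1 <= s <= 1) by lra.
  assert (HE : 0 < Rpower (r0 - t0) ga) by apply Rpower_pos.
  pose proof (radius_ge r0 rt s ltac:(lra) ltac:(lra) Hs) as HRa.
  assert (HR2 : radius r0 rt s <= 2 * (r0 - rt)).
  { unfold radius. rewrite <- (sqrt_square (2 * (r0 - rt))) by lra. apply sqrt_le_1_alt.
    rewrite radius2_eq.
    assert (2 * r0 * rt * (1 + s) <= (r0 - rt) * (r0 - rt)).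
    { apply Rle_trans with (2 * r0 * r0 * (1 + s)); [apply Rmult_le_compat_r; nra|].
      apply Rmult_le_reg_r with (/ (2 * (r0 * r0))); [apply Rinv_0_lt_compat; nra|].
      replace (2 * r0 * r0 * (1 + s) * / (2 * (r0 * r0))) with (1 + s) by (field; lra).
      exact Hp. }
    nra. }
  unfold radial. apply Rmult_le_compat; try (left; apply Rpower_pos).
  - apply Rle_Rpower_l_neg; [lra| |lra].
    eapply Rle_trans; [|apply radial_base_ge; lra].
    apply Rplus_le_compat_r. unfold near_slope.
    replace (r0 * r0 * Rpower (2 * (r0 - rt)) (ga - 2) / 2 * (1 + s))
      with (r0 * r0 * (1 + s) / 2 * Rpower (2 * (r0 - rt)) (ga - 2)) by (unfold Rdiv; ring).
    apply Rmult_le_compat_l; [unfold Rdiv; apply Rmult_le_pos; [apply Rmult_le_pos|]; nra|].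
    apply Rle_Rpower_l_neg; lra.
  - apply Rle_Rpower_l_neg; lra.
Qed.

(* Away from it [r^2] is comparable to [r0^2 (1 + s)]. *)
Lemma radial_le_far s : split_point r0 (r0 - rt) <= 1 + s -> s <= 1 ->
  radial al be ga t0 rt r0 s
  <= Rpower 2 ((3 - ga) * al + 3 * be / 2) * Rpower r0 (- (al * ga + be))
     * Rpower (1 + s) (- ((al * ga + be) / 2)).
Proof.
  intros Hp Hs1. unfold split_point in Hp.
  assert (Ha : 0 < (r0 - rt) * (r0 - rt) / (2 * (r0 * r0))) by (apply Rdiv_lt_0_compat; nra).
  assert (Hs : -1 <= s) by lra.
  assert (HE : 0 < Rpower (r0 - t0) ga) by apply Rpower_pos.
  pose proof (radius_pos r0 rt s ltac:(lra) ltac:(lra) Hs) as HR.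
  pose proof (radius_sqr r0 rt s ltac:(lra) ltac:(lra) Hs) as HRR.
  assert (Hap : (r0 - rt) * (r0 - rt) <= 2 * (r0 * r0) * (1 + s)).
  { apply Rmult_le_reg_r with (/ (2 * (r0 * r0))); [apply Rinv_0_lt_compat; nra|].
    replace (2 * (r0 * r0) * (1 + s) * / (2 * (r0 * r0))) with (1 + s) by (field; lra).
    exact Hp. }
  assert (HLu : radius2 r0 rt s <= 4 * (r0 * r0 * (1 + s))).
  { rewrite radius2_eq. assert (r0 * rt * (1 + s) <= r0 * r0 * (1 + s)) by
      (apply Rmult_le_compat_r; nra). nra. }
  assert (HLl : r0 * r0 * (1 + s) / 8 <= radius2 r0 rt s).
  { rewrite radius2_eq. destruct (Rle_dec (r0 / 2) rt).
    - assert (r0 * r0 * (1 + s) <= 2 * r0 * rt * (1 + s)) by (apply Rmult_le_compat_r; nra).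
      assert (0 <= r0 * r0 * (1 + s)) by nra. nra.
    - assert (r0 * r0 * (1 + s) <= 2 * r0 * r0) by nra.
      assert (0 <= r0 * rt * (1 + s)) by (apply Rmult_le_pos; nra). nra. }
  assert (HL0 : 0 < r0 * r0 * (1 + s) / 8) by (apply Rdiv_lt_0_compat; nra).
  apply Rle_trans with
    (Rpower (r0 * r0 * (1 + s) / 2 * Rpower (4 * (r0 * r0 * (1 + s))) ((ga - 2) / 2)) (- al)
     * Rpower (r0 * r0 * (1 + s) / 8) (- be / 2)).
  - unfold radial. apply Rmult_le_compat; try (left; apply Rpower_pos).
    + apply Rle_Rpower_l_neg; [apply Rmult_lt_0_compat; [nra | apply Rpower_pos] | | lra].
      eapply Rle_trans; [|apply radial_base_ge; lra].
      assert (r0 * r0 * (1 + s) / 2 * Rpower (4 * (r0 * r0 * (1 + s))) ((ga - 2) / 2)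
              <= r0 * r0 * (1 + s) / 2 * Rpower (radius r0 rt s) (ga - 2)).
      { apply Rmult_le_compat_l; [nra|].
        unfold radius. rewrite Rpower_sqrt_l by nra. apply Rle_Rpower_l_neg; lra. }
      lra.
    + unfold radius. rewrite Rpower_sqrt_l by nra. apply Rle_Rpower_l_neg; lra.
  - right. replace 4 with (2 * 2) by ring. replace 8 with (2 * 2 * 2) by ring.
    Rpower_eq.
Qed.

End Pointwise.

Lemma continuous_affine_Rpower A E q x : 0 <= A -> 0 < E -> -1 <= x ->
  continuous (fun s => Rpower (A * (1 + s) + E) q) x.
Proof.
  intros. apply continuous_Rpower; [continuity_R|].
  assert (0 <= A * (1 + x)) by (apply Rmult_le_pos; lra). lra.
Qed.

Section Antiderivatives.
Variables A E p : R.
Hypothesis A_pos : 0 < A.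
Hypothesis E_pos : 0 < E.
Hypothesis p_ge0 : 0 <= p.

Let affine_pos x : -1 <= x -> 0 < A * (1 + x) + E.
Proof. intros. assert (0 <= A * (1 + x)) by (apply Rmult_le_pos; lra). lra. Qed.

Lemma RInt_affine_Rpower al : al <> 1 ->
  RInt (fun s => Rpower (A * (1 + s) + E) (- al)) (-1) (-1 + p)
  = (Rpower (A * p + E) (1 - al) - Rpower E (1 - al)) / ((1 - al) * A).
Proof.
  intros Hal. assert (1 - al <> 0) by lra. eq_R.
  rewrite (RInt_is_derive_R (fun s => / ((1 - al) * A) * Rpower (A * (1 + s) + E) (1 - al))).
  - replace (A * (1 + (-1 + p)) + E) with (A * p + E) by ring.
    replace (A * (1 + -1) + E) with E by ring. field. split; lra.
  - intros x Hx. rewrite Rmin_left, Rmax_right in Hx by lra.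
    assert (Hd : is_derive (fun s => A * (1 + s) + E) x A) by (auto_derive; auto; ring).
    pose proof (is_derive_Rcomp _ _ x _ _ Hd
      (is_derive_Rpower _ (1 - al) (affine_pos x ltac:(lra)))).
    eapply is_derive_eq; [exact (is_derive_scal _ x (/ ((1 - al) * A)) _ H0)|].
    replace (1 - al - 1) with (- al) by ring. field. split; lra.
  - intros x Hx. rewrite Rmin_left, Rmax_right in Hx by lra.
    apply continuous_affine_Rpower; lra.
Qed.

Lemma RInt_affine_inv :
  RInt (fun s => Rpower (A * (1 + s) + E) (-1)) (-1) (-1 + p) = (ln (A * p + E) - ln E) / A.
Proof.
  eq_R.
  rewrite (RInt_is_derive_R (fun s => ln (A * (1 + s) + E) / A)).
  - replace (A * (1 + (-1 + p)) + E) with (A * p + E) by ring.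
    replace (A * (1 + -1) + E) with E by ring. field. lra.
  - intros x Hx. rewrite Rmin_left, Rmax_right in Hx by lra.
    pose proof (affine_pos x ltac:(lra)).
    rewrite Rpower_m1 by auto. auto_derive; [lra | field; lra].
  - intros x Hx. rewrite Rmin_left, Rmax_right in Hx by lra.
    apply continuous_affine_Rpower; lra.
Qed.

End Antiderivatives.

Lemma RInt_shift_Rpower k p : k <> 1 -> 0 < p -> p <= 2 ->
  RInt (fun s => Rpower (1 + s) (- k)) (-1 + p) 1
  = (Rpower 2 (1 - k) - Rpower p (1 - k)) / (1 - k).
Proof.
  intros Hk Hp Hp2. assert (1 - k <> 0) by lra. eq_R.
  rewrite (RInt_is_derive_R (fun s => / (1 - k) * Rpower (1 + s) (1 - k))).
  - replace (1 + (-1 + p)) with p by ring. replace (1 + 1) with 2 by ring. field. lra.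
  - intros x Hx. rewrite Rmin_left, Rmax_right in Hx by lra.
    assert (Hd : is_derive (fun s => 1 + s) x 1) by (auto_derive; auto; ring).
    pose proof (is_derive_Rcomp _ _ x _ _ Hd (is_derive_Rpower (1 + x) (1 - k) ltac:(lra))).
    eapply is_derive_eq; [exact (is_derive_scal _ x (/ (1 - k)) _ H0)|].
    replace (1 - k - 1) with (- k) by ring. field. lra.
  - intros x Hx. rewrite Rmin_left, Rmax_right in Hx by lra.
    apply continuous_Rpower; [continuity_R | lra].
Qed.

Definition near_int al ga r0 a D :=
  RInt (fun s => Rpower (near_slope ga r0 a * (1 + s) + Rpower D ga) (- al))
       (-1) (-1 + split_point r0 a).
Definition far_int k r0 a := RInt (fun s => Rpower (1 + s) (- k)) (-1 + split_point r0 a) 1.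

Definition K_near_lt1 al ga := Rpower 2 ((1 - al) * (ga - 4) - ga + 3) / (1 - al).
Definition K_near_gt1 al ga := Rpower 2 (3 - ga) / (al - 1).
Definition K_near_log ga eps :=
  Rpower (1 + Rpower 2 (ga - 4)) (eps / ga) / (eps / ga) * Rpower 2 (3 - ga).
Definition K_far al be ga := Rpower 2 ((3 - ga) * al + 3 * be / 2)
  * Rpower 2 ((al * ga + be) / 2 - 1) / ((al * ga + be) / 2 - 1).

Definition estimate_rhs al be ga eps r0 a D :=
  Rpower a (2 - be - ga + eps) * Rpower r0 (-2)
  * (Rpower a ((1 - al) * ga) + Rpower D ((1 - al) * ga)).

Lemma estimate_rhs_ge_diag al be ga eps eps' r0 a D : 1 <= a -> 0 <= eps' <= eps ->
  Rpower r0 (-2) * Rpower a (2 - (al * ga + be) + eps') <= estimate_rhs al be ga eps r0 a D.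
Proof.
  intros Ha He. unfold estimate_rhs. rewrite Rmult_plus_distr_l.
  replace (Rpower a (2 - be - ga + eps) * Rpower r0 (-2) * Rpower a ((1 - al) * ga))
    with (Rpower r0 (-2) * Rpower a (2 - (al * ga + be) + eps)) by Rpower_eq.
  pose proof (Rpower_pos r0 (-2)).
  assert (Rpower a (2 - (al * ga + be) + eps') <= Rpower a (2 - (al * ga + be) + eps))
    by (apply Rle_Rpower; lra).
  assert (0 < Rpower a (2 - be - ga + eps) * Rpower r0 (-2) * Rpower D ((1 - al) * ga))
    by Rpower_pos.
  nra.
Qed.

Lemma estimate_rhs_ge_offdiag al be ga eps r0 a D :
  Rpower a (2 - be - ga + eps) * Rpower r0 (-2) * Rpower D ((1 - al) * ga)
  <= estimate_rhs al be ga eps r0 a D.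
Proof.
  unfold estimate_rhs. rewrite Rmult_plus_distr_l.
  assert (0 < Rpower a (2 - be - ga + eps) * Rpower r0 (-2) * Rpower a ((1 - al) * ga))
    by Rpower_pos.
  lra.
Qed.

Lemma estimate_rhs_pos al be ga eps r0 a D : 0 < estimate_rhs al be ga eps r0 a D.
Proof. unfold estimate_rhs. Rpower_pos. Qed.

Lemma Rle_abs_mult_trans x K M S r : x <= K * M -> 0 <= M <= r -> Rabs K <= S -> x <= S * r.
Proof.
  intros Hx HM HK. pose proof (Rle_abs K). pose proof (Rabs_pos K).
  apply Rle_trans with (Rabs K * M); [nra|]. apply Rmult_le_compat; lra.
Qed.

Section NearIntegral.
Variables al be ga r0 a D : R.
Hypothesis ga_bounds : 1 < ga < 2.
Hypothesis a_ge : 2 <= a.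
Hypothesis a_le : a <= r0.
Hypothesis D_ge : 2 <= D.

Lemma near_int_le_lt1 : 0 <= al < 1 ->
  near_int al ga r0 a D * Rpower a (- be)
  <= K_near_lt1 al ga * (Rpower r0 (-2) * Rpower a (2 - (al * ga + be))).
Proof.
  intros Hal. pose proof (split_point_bounds r0 a ltac:(lra) a_le).
  pose proof (near_slope_pos ga r0 a ltac:(lra) a_le).
  set (A := near_slope ga r0 a) in *. set (p := split_point r0 a) in *.
  set (E := Rpower D ga). assert (HE : 0 < E) by apply Rpower_pos.
  unfold near_int. fold A p E. rewrite RInt_affine_Rpower by (auto; lra).
  apply Rle_trans with (Rpower (A * p) (1 - al) / ((1 - al) * A) * Rpower a (- be)).
  - apply Rmult_le_compat_r; [left; apply Rpower_pos|].
    unfold Rdiv. apply Rmult_le_compat_r; [left; apply Rinv_0_lt_compat; nra|].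
    pose proof (Rpower_plus_le (A * p) E (1 - al) ltac:(nra) HE ltac:(lra)). lra.
  - right. unfold K_near_lt1.
    replace (Rpower (A * p) (1 - al) / ((1 - al) * A) * Rpower a (- be))
      with (/ (1 - al) * Rpower (A * p) (1 - al) * (Rpower A (-1) * Rpower a (- be)))
      by (rewrite Rpower_m1 by lra; field; lra).
    unfold A, p. rewrite near_slope_split, near_slope_inv_Rpower, Rmult_assoc by lra.
    replace (Rpower (Rpower 2 (ga - 4) * Rpower a ga) (1 - al)
             * (Rpower 2 (3 - ga) * (Rpower r0 (-2) * Rpower a (2 - ga - be))))
      with (Rpower 2 ((1 - al) * (ga - 4) - ga + 3)
            * (Rpower r0 (-2) * Rpower a (2 - (al * ga + be))))
      by Rpower_eq.
    field. lra.
Qed.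

Lemma near_int_le_gt1 : 1 < al ->
  near_int al ga r0 a D * Rpower a (- be)
  <= K_near_gt1 al ga * (Rpower a (2 - be - ga) * Rpower r0 (-2) * Rpower D ((1 - al) * ga)).
Proof.
  intros Hal. pose proof (split_point_bounds r0 a ltac:(lra) a_le).
  pose proof (near_slope_pos ga r0 a ltac:(lra) a_le).
  set (A := near_slope ga r0 a) in *. set (p := split_point r0 a) in *.
  set (E := Rpower D ga). assert (HE : 0 < E) by apply Rpower_pos.
  unfold near_int. fold A p E. rewrite RInt_affine_Rpower by (auto; lra).
  apply Rle_trans with (Rpower E (1 - al) / ((al - 1) * A) * Rpower a (- be)).
  - apply Rmult_le_compat_r; [left; apply Rpower_pos|].
    pose proof (Rpower_pos (A * p + E) (1 - al)).
    replace ((Rpower (A * p + E) (1 - al) - Rpower E (1 - al)) / ((1 - al) * A))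
      with ((Rpower E (1 - al) - Rpower (A * p + E) (1 - al)) / ((al - 1) * A))
      by (field; split; lra).
    unfold Rdiv. apply Rmult_le_compat_r; [left; apply Rinv_0_lt_compat; nra | lra].
  - right. unfold K_near_gt1, E. rewrite Rpower_mult.
    replace (Rpower D (ga * (1 - al)) / ((al - 1) * A) * Rpower a (- be))
      with (/ (al - 1) * Rpower D (ga * (1 - al)) * (Rpower A (-1) * Rpower a (- be)))
      by (rewrite Rpower_m1 by lra; field; lra).
    unfold A. rewrite near_slope_inv_Rpower by lra.
    replace (ga * (1 - al)) with ((1 - al) * ga) by ring.
    replace (2 - ga - be) with (2 - be - ga) by ring.
    field. lra.
Qed.

Lemma near_int_le_log eps : al = 1 -> 0 < eps ->
  near_int al ga r0 a D * Rpower a (- be)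
  <= K_near_log ga eps * (Rpower r0 (-2) * Rpower a (2 - (al * ga + be) + eps)).
Proof.
  intros Hal Heps. rewrite Hal. pose proof (split_point_bounds r0 a ltac:(lra) a_le).
  pose proof (near_slope_pos ga r0 a ltac:(lra) a_le).
  set (A := near_slope ga r0 a) in *. set (p := split_point r0 a) in *.
  set (E := Rpower D ga). set (eta := eps / ga).
  assert (Heta : 0 < eta) by (apply Rdiv_lt_0_compat; lra).
  assert (HE1 : 1 <= E) by (unfold E; rewrite <- (Rpower_O D) by lra; apply Rle_Rpower; lra).
  assert (Hag : 1 <= Rpower a ga) by (rewrite <- (Rpower_O a) by lra; apply Rle_Rpower; lra).
  assert (HAp : A * p = Rpower 2 (ga - 4) * Rpower a ga) by (apply near_slope_split; lra).
  assert (HAp0 : 0 < A * p) by nra.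
  unfold near_int. fold A p E. replace (- (1)) with (-1) by ring.
  rewrite RInt_affine_inv by (auto; lra).
  assert (Hln : ln (A * p + E) - ln E <= ln (1 + A * p)).
  { assert (ln (A * p + E) <= ln (E * (1 + A * p))) by (apply ln_le; nra).
    rewrite ln_mult in H1 by lra. lra. }
  assert (Hln0 : 0 <= ln (A * p + E) - ln E).
  { assert (ln E <= ln (A * p + E)) by (apply ln_le; lra). lra. }
  pose proof (ln_le_Rpower_div (1 + A * p) eta ltac:(lra) Heta) as Hb.
  assert (Hc : Rpower (1 + A * p) eta <= Rpower (1 + Rpower 2 (ga - 4)) eta * Rpower a eps).
  { pose proof (Rpower_pos 2 (ga - 4)). pose proof (Rpower_pos a ga).
    apply Rle_trans with (Rpower ((1 + Rpower 2 (ga - 4)) * Rpower a ga) eta).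
    - rewrite HAp. apply Rle_Rpower_l; [lra | split; nra].
    - right. rewrite <- Rpower_mult_distr, Rpower_mult by lra.
      replace (ga * eta) with eps by (unfold eta; field; lra). reflexivity. }
  apply Rle_trans
    with (Rpower (1 + Rpower 2 (ga - 4)) eta * Rpower a eps / eta
          * (Rpower A (-1) * Rpower a (- be))).
  - rewrite Rpower_m1 by lra.
    replace ((ln (A * p + E) - ln E) / A * Rpower a (- be))
      with ((ln (A * p + E) - ln E) * (/ A * Rpower a (- be))) by (field; lra).
    apply Rmult_le_compat_r;
      [apply Rmult_le_pos; [left; apply Rinv_0_lt_compat | left; apply Rpower_pos]; lra|].
    unfold Rdiv. apply Rle_trans with (Rpower (1 + A * p) eta * / eta); [lra|].
    apply Rmult_le_compat_r; [left; apply Rinv_0_lt_compat; lra | exact Hc].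
  - right. unfold A. rewrite near_slope_inv_Rpower by lra. unfold K_near_log. fold eta.
    replace (2 - (1 * ga + be) + eps) with (eps + (2 - ga - be)) by ring.
    rewrite Rpower_plus. field. lra.
Qed.

Lemma near_int_le_rhs eps : 0 <= al -> (al <> 1 -> eps = 0) -> (al = 1 -> 0 < eps) ->
  near_int al ga r0 a D * Rpower a (- be)
  <= (Rabs (K_near_lt1 al ga) + Rabs (K_near_gt1 al ga) + Rabs (K_near_log ga eps))
     * estimate_rhs al be ga eps r0 a D.
Proof.
  intros Hal He0 He1.
  pose proof (Rabs_pos (K_near_lt1 al ga)). pose proof (Rabs_pos (K_near_gt1 al ga)).
  pose proof (Rabs_pos (K_near_log ga eps)).
  destruct (Rtotal_order al 1) as [Hlt | [Heq | Hgt]].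
  - rewrite (He0 ltac:(lra)) in *.
    eapply Rle_abs_mult_trans; [apply near_int_le_lt1; lra | | lra].
    split; [left; Rpower_pos|].
    rewrite <- (Rplus_0_r (2 - (al * ga + be))). apply estimate_rhs_ge_diag; lra.
  - eapply Rle_abs_mult_trans; [apply (near_int_le_log eps Heq (He1 Heq)) | | lra].
    split; [left; Rpower_pos | apply estimate_rhs_ge_diag; lra].
  - rewrite (He0 ltac:(lra)) in *.
    eapply Rle_abs_mult_trans; [apply near_int_le_gt1; lra | | lra].
    split; [left; Rpower_pos|].
    rewrite <- (Rplus_0_r (2 - be - ga)). apply estimate_rhs_ge_offdiag.
Qed.

End NearIntegral.

Lemma far_int_le m c r0 a : 0 < a <= r0 -> 2 < m -> 0 < c ->
  c * Rpower r0 (- m) * far_int (m / 2) r0 a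
  <= c * Rpower 2 (m / 2 - 1) / (m / 2 - 1) * (Rpower r0 (-2) * Rpower a (2 - m)).
Proof.
  intros Ha Hm Hc. pose proof (split_point_bounds r0 a ltac:(lra) ltac:(lra)).
  set (p := split_point r0 a) in *.
  unfold far_int. fold p. rewrite RInt_shift_Rpower by lra.
  apply Rle_trans with (c * Rpower r0 (- m) * (Rpower p (1 - m / 2) / (m / 2 - 1))).
  - apply Rmult_le_compat_l; [left; apply Rmult_lt_0_compat; [lra | apply Rpower_pos]|].
    pose proof (Rpower_pos 2 (1 - m / 2)).
    replace ((Rpower 2 (1 - m / 2) - Rpower p (1 - m / 2)) / (1 - m / 2))
      with ((Rpower p (1 - m / 2) - Rpower 2 (1 - m / 2)) / (m / 2 - 1)) by (field; lra).
    unfold Rdiv. apply Rmult_le_compat_r; [left; apply Rinv_0_lt_compat|]; lra.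
  - right. transitivity (c / (m / 2 - 1) * (Rpower r0 (- m) * Rpower p (1 - m / 2)));
      [field; lra|].
    replace (Rpower r0 (- m) * Rpower p (1 - m / 2))
      with (Rpower 2 (m / 2 - 1) * (Rpower r0 (-2) * Rpower a (2 - m)))
      by (unfold p, split_point; Rpower_eq).
    field. lra.
Qed.

Lemma RInt_radial_split al be ga t0 rt r0 :
  1 < ga < 2 -> 0 <= al -> 0 <= be -> 0 <= rt <= t0 -> t0 + 2 <= r0 ->
  RInt (radial al be ga t0 rt r0) (-1) 1
  <= near_int al ga r0 (r0 - rt) (r0 - t0) * Rpower (r0 - rt) (- be)
     + Rpower 2 ((3 - ga) * al + 3 * be / 2) * Rpower r0 (- (al * ga + be))
       * far_int ((al * ga + be) / 2) r0 (r0 - rt).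
Proof.
  intros Hg Hal Hbe Hrt Hr0.
  pose proof (split_point_bounds r0 (r0 - rt) ltac:(lra) ltac:(lra)).
  pose proof (near_slope_pos ga r0 (r0 - rt) ltac:(lra) ltac:(lra)).
  set (p := split_point r0 (r0 - rt)) in *. set (A := near_slope ga r0 (r0 - rt)) in *.
  set (c := Rpower 2 ((3 - ga) * al + 3 * be / 2) * Rpower r0 (- (al * ga + be))).
  set (k := (al * ga + be) / 2).
  assert (HE : 0 < Rpower (r0 - t0) ga) by apply Rpower_pos.
  assert (Exn : ex_RInt (fun s => Rpower (A * (1 + s) + Rpower (r0 - t0) ga) (- al))
                        (-1) (-1 + p)).
  { apply ex_RInt_continuous_R. intros z Hz. rewrite Rmin_left, Rmax_right in Hz by lra.
    apply continuous_affine_Rpower; lra. }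
  assert (Exf : ex_RInt (fun s => Rpower (1 + s) (- k)) (-1 + p) 1).
  { apply ex_RInt_continuous_R. intros z Hz. rewrite Rmin_left, Rmax_right in Hz by lra.
    apply continuous_Rpower; [continuity_R | lra]. }
  rewrite <- (RInt_Chasles (V:=R_CompleteNormedModule) _ (-1) (-1 + p) 1)
    by (apply ex_RInt_radial; lra).
  change (plus ?x ?y) with (x + y).
  apply Rplus_le_compat.
  - unfold near_int. fold p A. rewrite <- RInt_Rmult_r by auto.
    apply RInt_le; [lra | apply ex_RInt_radial; lra | |].
    + apply ex_RInt_continuous_R. intros z Hz. rewrite Rmin_left, Rmax_right in Hz by lra.
      apply continuous_Rmult; [apply continuous_affine_Rpower; lra | apply continuous_const].
    + intros x Hx. apply radial_le_near; try lra. fold p. lra.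
  - unfold far_int. fold p k. rewrite <- RInt_Rmult_l by auto.
    apply RInt_le; [lra | apply ex_RInt_radial; lra | |].
    + apply ex_RInt_continuous_R. intros z Hz. rewrite Rmin_left, Rmax_right in Hz by lra.
      apply continuous_Rmult; [apply continuous_const|].
      apply continuous_Rpower; [continuity_R | lra].
    + intros x Hx. apply radial_le_far; try lra. fold p. lra.
Qed.

Definition K_total al be ga eps := Rabs (K_near_lt1 al ga) + Rabs (K_near_gt1 al ga)
  + Rabs (K_near_log ga eps) + Rabs (K_far al be ga).

Lemma K_total_ge0 al be ga eps : 0 <= K_total al be ga eps.
Proof.
  unfold K_total. pose proof (Rabs_pos (K_near_lt1 al ga)).
  pose proof (Rabs_pos (K_near_gt1 al ga)). pose proof (Rabs_pos (K_near_log ga eps)).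
  pose proof (Rabs_pos (K_far al be ga)). lra.
Qed.

Lemma RInt_radial_le al be ga eps t0 rt r0 :
  1 < ga < 2 -> 0 <= al -> 0 <= be -> be + al * ga > 2 ->
  (al <> 1 -> eps = 0) -> (al = 1 -> 0 < eps) -> 0 <= rt <= t0 -> t0 + 2 <= r0 ->
  RInt (radial al be ga t0 rt r0) (-1) 1
  <= K_total al be ga eps * estimate_rhs al be ga eps r0 (r0 - rt) (r0 - t0).
Proof.
  intros Hg Hal Hbe Hk He0 He1 Hrt Hr0.
  assert (Heps : 0 <= eps) by (destruct (Req_dec al 1); [left | right; symmetry]; auto).
  eapply Rle_trans; [apply RInt_radial_split; auto|].
  unfold K_total. rewrite Rmult_plus_distr_r.
  apply Rplus_le_compat; [apply near_int_le_rhs; auto; lra|].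
  eapply Rle_abs_mult_trans; [apply far_int_le; try lra; apply Rpower_pos | | apply Rle_refl].
  split; [left; Rpower_pos|].
  rewrite <- (Rplus_0_r (2 - (al * ga + be))). apply estimate_rhs_ge_diag; lra.
Qed.

Theorem lemma4p1 :
  forall alpha beta gamma : R,
    1 < gamma -> gamma < 2 -> 0 <= alpha -> 0 <= beta ->
    beta + alpha * gamma > 2 ->
  forall eps : R,
    (alpha <> 1 -> eps = 0) -> (alpha = 1 -> 0 < eps) ->
  exists C : R, 0 < C /\
    forall (t0 : R) (x0 : vec3) (rt : R),
      0 <= t0 -> norm3 x0 >= t0 + 2 -> 0 <= rt -> rt <= t0 ->
      let r0 := norm3 x0 in
      sphere_integral (integrand alpha beta gamma t0 rt x0)
      <= C * Rpower (r0 - rt) (2 - beta - gamma + eps) * Rpower r0 (-2)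
           * (Rpower (r0 - rt) ((1 - alpha) * gamma)
              + Rpower (r0 - t0) ((1 - alpha) * gamma)).
Proof.
  intros al be ga Hg1 Hg2 Hal Hbe Hk eps He0 He1.
  pose proof (K_total_ge0 al be ga eps) as HK.
  exists (2 * PI * (K_total al be ga eps + 1)). split; [pose proof PI_RGT_0; nra|].
  intros t0 x0 rt Ht0 Hx0 Hrt0 Hrt r0.
  rewrite sphere_integral_radial by lra.
  pose proof (RInt_radial_le al be ga eps t0 rt r0 ltac:(lra) Hal Hbe Hk He0 He1
    ltac:(lra) ltac:(unfold r0; lra)) as Hint.
  pose proof (estimate_rhs_pos al be ga eps r0 (r0 - rt) (r0 - t0)). pose proof PI_RGT_0.
  fold r0. unfold estimate_rhs in *. nra.
Qed.
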